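(* $z_2(5,3)=9$.
   Context: Double Zarankiewicz number: consider configurations $G=([m],[n],E_1\cup E_2)$ where $[m]=\{1,\dots,m\}$, $E_1\subseteq[m]\times[n]$ is a set of 1-edges (cells) and $E_2$ is a set of 2-edges $(i,j;k,l)$ with $i,k\in[m]$, $j,l\in[n]$, $i\ne k$, $j\ne l$; the cells $(i,j)$ and $(k,l)$ are the two halves of this 2-edge. Simplicity condition: the halves of all 2-edges are pairwise distinct cells and none of them belongs to $E_1$. A cell is occupied if it lies in $E_1$ or is a half of some 2-edge. $G$ contains a generalized $C_4$-cycle if (1) there are four 1-edges $(i,j),(i,l),(k,j),(k,l)\in E_1$ with $i\ne k$, $j\ne l$; or (2) there is a 2-edge $(i,j;k,l)\in E_2$ whose two opposite cells $(i,l)$ and $(k,j)$ are both occupied; or (3) there are a 2-edge $(i,j;p,q)\in E_2$ and a cell $(k,l)$ such that the five cells $(k,l),(k,j),(k,q),(i,l),(p,l)$ are pairwise distinct and all occupied. $z_2(m,n)$ is the maximum of $|E_1|+|E_2|$ over all such $G$ satisfying the simplicity condition and containing no generalized $C_4$-cycle. *)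

(* Rows [m] are represented by 'I_m = {0,..,m-1},
   columns [n] by 'I_n. *)
From mathcomp Require Import all_boot all_order.
Set Implicit Arguments. Unset Strict Implicit. Unset Printing Implicit Defensive.

Section Zarankiewicz.
Variables m n : nat.

Definition cell := ('I_m * 'I_n)%type.

(* a 2-edge (i,j;k,l) is the ordered pair of its halves ((i,j),(k,l)) *)
Definition two_edge := (cell * cell)%type.

Definition is_two_edge (e : two_edge) : bool :=
  (e.1.1 != e.2.1) && (e.1.2 != e.2.2).

(* a configuration G = ([m],[n], E1 u E2) *)
Definition config := ({set cell} * {set two_edge})%type.

Definition halves (e : two_edge) : {set cell} := [set e.1; e.2].

Definition simple (G : config) : bool :=
  [forall e in G.2, is_two_edge e] &&
  [forall e in G.2, forall f in G.2,
      (e != f) ==> [disjoint halves e & halves f]] &&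
  [forall e in G.2, (e.1 \notin G.1) && (e.2 \notin G.1)].

Definition occupied (G : config) (c : cell) : bool :=
  (c \in G.1) || [exists e in G.2, (c == e.1) || (c == e.2)].

(* (1): four 1-edges forming a C4 *)
Definition c4_type1 (G : config) : bool :=
  [exists i : 'I_m, exists k : 'I_m, exists j : 'I_n, exists l : 'I_n,
     [&& i != k, j != l, (i, j) \in G.1, (i, l) \in G.1,
         (k, j) \in G.1 & (k, l) \in G.1]].

(* (2): a 2-edge (i,j;k,l) with (i,l) and (k,j) occupied *)
Definition c4_type2 (G : config) : bool :=
  [exists e in G.2,
     occupied G (e.1.1, e.2.2) && occupied G (e.2.1, e.1.2)].

(* (3): a 2-edge (i,j;p,q) and a cell (k,l) such that the five cells
   (k,l),(k,j),(k,q),(i,l),(p,l) are pairwise distinct and occupied *)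
Definition c4_type3 (G : config) : bool :=
  [exists e in G.2, exists c : cell,
     let i := e.1.1 in let j := e.1.2 in let p := e.2.1 in let q := e.2.2 in
     let k := c.1 in let l := c.2 in
     let s := [:: (k, l); (k, j); (k, q); (i, l); (p, l)] in
     uniq s && all (occupied G) s].

Definition has_gen_C4 (G : config) : bool :=
  [|| c4_type1 G, c4_type2 G | c4_type3 G].

Definition admissible (G : config) : bool := simple G && ~~ has_gen_C4 G.

Definition weight (G : config) : nat := #|G.1| + #|G.2|.

Definition z2 : nat := \max_(G : config | admissible G) weight G.

End Zarankiewicz.

(** The lower bound is an explicit configuration with eight 1-edges and one 2-edge.

   For the upper bound let Z be the set of unoccupied cells.  The cells split into
   1-edges, halves of 2-edges and Z, so |E1| + 2|E2| + |Z| = 15.  By (2) every 2-edge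
   has an unoccupied opposite cell, its free corner, which shares its row with one half
   of the 2-edge.  These halves occupy distinct columns avoiding the free corners, so at
   most two free corners lie in one row and |E2| <= 2|Z|.  By (1) two rows share at most
   one column, hence sum_i C(d_i, 2) <= C(3, 2) for the row sizes d_i of E1, i.e.
   |E1| + #(empty rows) + #(full rows) <= 8.  If |E1| + |E2| >= 10, these counts leave
   two cases.  When |E1| = 7 and |E2| = 3, two 2-edges share a free corner; its row is
   then empty, which forces two rows with the same two cells.  When |E1| = 8 and
   |E2| >= 2, all row sizes are 1 or 2 and two 2-edges produce a forbidden pattern (3). *)

From mathcomp Require Import all_boot all_order zify.
Set Implicit Arguments. Unset Strict Implicit. Unset Printing Implicit Defensive.

Section Rows.
Variables m n : nat.
Implicit Type E : {set 'I_m * 'I_n}.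

Definition row E (i : 'I_m) : {set 'I_n} := [set j | (i, j) \in E].

Definition C4_free E := forall i k, i != k -> #|row E i :&: row E k| <= 1.

Lemma card_row E i : #|row E i| = \sum_j ((i, j) \in E).
Proof. by rewrite -sum1dep_card big_mkcond; apply: eq_bigr => j _; case: ((i, j) \in E). Qed.

Lemma card_sum_rows E : #|E| = \sum_i #|row E i|.
Proof.
under eq_bigr do rewrite card_row.
rewrite pair_bigA /= -sum1_card big_mkcond /=.
by apply: eq_bigr => -[i j] _; case: ((i, j) \in E).
Qed.

Lemma card_row_add_size_le E i (s : seq 'I_n) :
  uniq s -> all (fun j => (i, j) \notin E) s -> #|row E i| + size s <= n.
Proof.
move=> s_uniq /allP s_out.
have card_s : size s + #|~: [set j in s]| = n.
  by have := cardsC [set j in s]; rewrite cardsE (card_uniqP s_uniq) card_ord.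
rewrite -[X in _ <= X]card_s addnC leq_add2l subset_leq_card //.
by apply/subsetP => j; rewrite !inE; apply: contraL => /s_out.
Qed.

Lemma sum_row_deficits_le E b (s : seq 'I_m) : uniq s -> (forall i, #|row E i| <= b) ->
  \sum_(i <- s) (b - #|row E i|) + #|E| <= b * m.
Proof.
move=> s_uniq le_b; have sub_sum :
    \sum_(i <- s) (b - #|row E i|) <= \sum_i (b - #|row E i|).
  apply: (uniq_sub_le_big leqnn (fun x y => leq_addr y x)) => //; first exact: index_enum_uniq.
  by move=> i; rewrite mem_index_enum.
rewrite card_sum_rows (leq_trans (leq_add sub_sum (leqnn _))) //.
rewrite -big_split /= (eq_bigr (fun=> b)) => [|i _]; last by rewrite subnK.
by rewrite sum_nat_const card_ord mulnC.
Qed.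

Lemma sum_bin2_rows_le E : C4_free E -> \sum_i 'C(#|row E i|, 2) <= 'C(n, 2).
Proof.
move=> E_C4; rewrite -[n in 'C(n, 2)](card_ord n) -card_draws.
under eq_bigr do rewrite -cards_draws -sum1dep_card big_mkcond /=.
rewrite exchange_big /= -sum1dep_card [X in _ <= X]big_mkcond /=; apply: leq_sum => P _.
case: eqP => [P2 | _] /=; last by rewrite big1 // => i _; rewrite andbF.
rewrite -big_mkcond /= sum1dep_card; apply/card_le1_eqP => i k; rewrite !inE !andbT => Pi Pk.
have [// | ik] := eqVneq k i; have := E_C4 _ _ ik; rewrite leqNgt => /negP[].
by rewrite -P2 subset_leq_card // subsetI Pk.
Qed.
End Rows.

Section ThreeColumns.
Variables (m : nat) (E : {set 'I_m * 'I_3}).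

Lemma row_eq_setC1 i s : #|row E i| = 2 -> (i, s) \notin E -> row E i = [set~ s].
Proof.
move=> row2 is_out; apply/eqP; rewrite eqEcard cardsC1 card_ord row2 andbT.
by apply/subsetP => j; rewrite !inE; apply: contraTneq => ->.
Qed.

Hypothesis E_C4 : C4_free E.

Lemma card_empty_full_rows_le :
  #|E| + #|[set i | #|row E i| == 0]| + #|[set i | #|row E i| == 3]| <= m + 3.
Proof.
have row_le3 i : #|row E i| <= 3 by rewrite -[X in _ <= X](card_ord 3) max_card.
have card_set_sum (P : pred 'I_m) : #|[set i | P i]| = \sum_i P i.
  by rewrite -sum1dep_card big_mkcond; apply: eq_bigr => i _; case: (P i).
rewrite card_sum_rows !card_set_sum -!big_split /=.
(* For d <= 3: d + (d == 0) + (d == 3) = 'C(d, 2) + 1. *)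
rewrite (eq_bigr (fun i => 'C(#|row E i|, 2) + 1)) => [|i _]; last first.
  by move: (row_le3 i); case: #|row E i| => [|[|[|[|]]]].
rewrite big_split /= sum_nat_const card_ord muln1 addnC leq_add2l.
exact: sum_bin2_rows_le.
Qed.

Lemma C4_free_rows_missing_same_column i k s : i != k -> (i, s) \notin E -> (k, s) \notin E ->
  #|row E i| = 2 -> #|row E k| = 2 -> False.
Proof.
move=> ik is_out ks_out row_i row_k; have := E_C4 ik.
by rewrite (row_eq_setC1 row_i is_out) (row_eq_setC1 row_k ks_out) setIid cardsC1 card_ord.
Qed.
End ThreeColumns.

Section Admissible.
Variables (m n : nat) (G : config m n).
Local Notation E := G.1.
Local Notation T := G.2.
Local Notation occ := (occupied G).

(* By (2), one of the two opposite cells of a 2-edge is unoccupied; [free_corner t] is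
   such a cell, lying in the row of [row_half t] and the column of [col_half t]. *)
Definition row_half (t : two_edge m n) : cell m n :=
  if occ (t.1.1, t.2.2) then t.2 else t.1.
Definition col_half (t : two_edge m n) : cell m n :=
  if occ (t.1.1, t.2.2) then t.1 else t.2.
Definition free_corner (t : two_edge m n) : cell m n := ((row_half t).1, (col_half t).2).

Lemma row_half_mem t : row_half t \in halves t.
Proof. by rewrite /row_half !inE; case: ifP; rewrite eqxx ?orbT. Qed.

Lemma col_half_mem t : col_half t \in halves t.
Proof. by rewrite /col_half !inE; case: ifP; rewrite eqxx ?orbT. Qed.

Lemma occupied_half t c : t \in T -> c \in halves t -> occ c.
Proof. by move=> tT ct; apply/orP; right; apply/exists_inP; exists t; rewrite -?in_set2. Qed.

Lemma occupiedE c : occ c = (c \in E) || (c \in \bigcup_(t in T) halves t).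
Proof.
by rewrite /occupied; congr orb; apply/exists_inP/bigcupP => -[t tT ct];
  exists t => //; move: ct; rewrite /halves !inE.
Qed.

Hypothesis G_adm : admissible G.

Lemma is_two_edge_mem t : t \in T -> is_two_edge t.
Proof. by case/andP: G_adm => /andP[/andP[/forall_inP two _] _] _; apply: two. Qed.

Lemma half_notin_E t c : t \in T -> c \in halves t -> c \notin E.
Proof.
case/andP: G_adm => /andP[_ /forall_inP out] _ /out /andP[t1_out t2_out].
by rewrite !inE => /orP[] /eqP ->.
Qed.

Lemma eq_two_edge_of_half t t' c :
  t \in T -> t' \in T -> c \in halves t -> c \in halves t' -> t = t'.
Proof.
move=> tT t'T ct ct'; apply/eqP/negPn/negP => tt'.
case/andP: G_adm => /andP[/andP[_ /forall_inP disj] _] _.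
have /forall_inP/(_ t' t'T) := disj t tT; rewrite tt' => /disjointFr/(_ ct).
by rewrite ct'.
Qed.

Lemma admissible_no_gen_C4 : [/\ ~~ c4_type1 G, ~~ c4_type2 G & ~~ c4_type3 G].
Proof. by case/andP: G_adm => _; rewrite !negb_or => /and3P. Qed.

Lemma C4_free_admissible : C4_free E.
Proof.
move=> i k ik; rewrite leqNgt; apply/negP => /card_gt1P[j [l [jik lik jl]]].
case: admissible_no_gen_C4 => /negP no1 _ _; apply: no1.
move: jik lik; rewrite !inE => /andP[ij kj] /andP[il kl].
by apply/existsP; exists i; apply/existsP; exists k; apply/existsP; exists j;
  apply/existsP; exists l; rewrite ik jl ij il kj kl.
Qed.

Lemma is_two_edge_oriented t : t \in T -> is_two_edge (row_half t, col_half t).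
Proof.
move/is_two_edge_mem; rewrite /is_two_edge /row_half /col_half.
by case: ifP => //= _ /andP[r c]; rewrite eq_sym r eq_sym c.
Qed.

Lemma free_corner_unoccupied t : t \in T -> ~~ occ (free_corner t).
Proof.
move=> tT; case: admissible_no_gen_C4 => _ /exists_inPn/(_ t tT) + _.
rewrite /free_corner /row_half /col_half.
by case: (boolP (occ (t.1.1, t.2.2))).
Qed.

Lemma no_type3_oriented t k l : t \in T ->
  let s := [:: (k, l); (k, (row_half t).2); (k, (col_half t).2);
               ((row_half t).1, l); ((col_half t).1, l)] in
  uniq s -> all occ s -> False.
Proof.
move=> tT s s_uniq s_occ.
have swap : perm_eq s [:: (k, l); (k, t.1.2); (k, t.2.2); (t.1.1, l); (t.2.1, l)].
  rewrite /s /row_half /col_half; case: ifP => _ //; apply/permP => p /=.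
  by rewrite [p (k, t.2.2) + _]addnCA [p (t.2.1, l) + _]addnCA.
case: admissible_no_gen_C4 => _ _ /exists_inPn/(_ t tT)/existsPn/(_ (k, l))/negP; apply.
by apply/andP; rewrite -(perm_uniq swap) -(perm_all _ swap).
Qed.

Lemma free_corner_notin_E t : t \in T -> free_corner t \notin E.
Proof. by move/free_corner_unoccupied; apply: contra => cE; rewrite /occupied cE. Qed.

Lemma col_half_rows_neq ta tb : ta \in T -> tb \in T -> ta != tb ->
  (col_half ta).2 = (col_half tb).2 -> (col_half ta).1 != (col_half tb).1.
Proof.
move=> taT tbT ab cols_ab; apply: contra ab => /eqP rows_ab.
apply/eqP/(eq_two_edge_of_half taT tbT (col_half_mem ta)).
by rewrite [col_half ta]surjective_pairing rows_ab cols_ab -surjective_pairing col_half_mem.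
Qed.

Lemma card_row_free_corner t : t \in T -> #|row E (free_corner t).1| + 2 <= n.
Proof.
move=> tT; have /andP[_ /= cols] := is_two_edge_oriented tT.
apply: (card_row_add_size_le (s := [:: (row_half t).2; (col_half t).2])).
  by rewrite /= inE andbT.
rewrite /= -surjective_pairing (half_notin_E tT (row_half_mem t)).
by rewrite [(_, _)]/(free_corner t) free_corner_notin_E.
Qed.

Lemma card_row_free_corner_half t t' c : t \in T -> t' \in T -> t != t' ->
  c \in halves t' -> c.1 = (free_corner t).1 -> #|row E c.1| + 3 <= n.
Proof.
move=> tT t'T tt' ct' c_row; have c_row' : c.1 = (row_half t).1 := c_row.
have /andP[_ /= cols] := is_two_edge_oriented tT.
have c_occ := occupied_half t'T ct'.
apply: (card_row_add_size_le (s := [:: (row_half t).2; (col_half t).2; c.2])).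
  rewrite /= !inE negb_or cols /= andbT; apply/andP; split.
    apply: contraNneq tt' => col_eq; apply/eqP/(eq_two_edge_of_half tT t'T (row_half_mem t)).
    by rewrite [row_half t]surjective_pairing col_eq -c_row' -surjective_pairing.
  apply: contraTneq c_occ => col_eq.
  by rewrite [c]surjective_pairing c_row -col_eq; exact: free_corner_unoccupied.
rewrite /= -surjective_pairing (half_notin_E t'T ct') c_row' -surjective_pairing.
by rewrite (half_notin_E tT (row_half_mem t)) /= andbT; exact: free_corner_notin_E.
Qed.

Lemma card_free_corners_in_row_le a : #|[set t in T | (free_corner t).1 == a]| <= n.-1.
Proof.
set S := [set t in T | _]; have [-> | [t0 t0S]] := set_0Vmem S; first by rewrite cards0.
have row_S t : t \in S -> (t \in T) /\ (row_half t).1 = a.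
  by rewrite inE => /andP[tT /eqP].
have [t0T row_t0] := row_S t0 t0S.
rewrite -(card_in_imset (f := fun t => (row_half t).2)); last first.
  move=> t t' /row_S[tT row_t] /row_S[t'T row_t'] col_eq.
  apply: (eq_two_edge_of_half tT t'T (row_half_mem t)).
  rewrite [row_half t]surjective_pairing row_t col_eq -row_t' -surjective_pairing.
  exact: row_half_mem.
rewrite -[n in n.-1](card_ord n) -(cardsC1 (free_corner t0).2).
apply/subset_leq_card/subsetP => _ /imsetP[t tS ->]; have [tT row_t] := row_S t tS.
rewrite in_setC1; apply: contraTneq (occupied_half tT (row_half_mem t)) => col_eq.
by rewrite [row_half t]surjective_pairing row_t col_eq -row_t0; exact: free_corner_unoccupied.
Qed.

Lemma card_cells : #|E| + 2 * #|T| + #|[set c | ~~ occ c]| = m * n.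
Proof.
set H := \bigcup_(t in T) halves t.
have card_H : #|H| = 2 * #|T|.
  have halves_inj : {in T &, injective (@halves m n)}.
    move=> t t' tT t'T eq_h; apply: (eq_two_edge_of_half tT t'T (c := t.1)).
      by rewrite !inE eqxx.
    by rewrite -eq_h !inE eqxx.
  have : trivIset (@halves m n @: T).
    apply/trivIsetP => _ _ /imsetP[t tT ->] /imsetP[t' t'T ->] neq.
    rewrite disjoint_subset; apply/subsetP => c ct; rewrite inE; apply: contra neq => ct'.
    by rewrite (eq_two_edge_of_half tT t'T ct ct').
  rewrite /trivIset cover_imset big_imset //= => /eqP <-.
  rewrite (eq_bigr (fun=> 2)) ?sum_nat_const 1?mulnC // => t tT.
  have /andP[rows _] := is_two_edge_mem tT.
  by rewrite cards2 (_ : t.1 != t.2) //; apply: contraNneq rows => ->.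
have EH : E :&: H = set0.
  apply/setP => c; rewrite !inE; apply/negbTE/andP => -[cE /bigcupP[t tT ct]].
  by move: cE; rewrite (negbTE (half_notin_E tT ct)).
have -> : [set c | ~~ occ c] = ~: (E :|: H) by apply/setP => c; rewrite !inE occupiedE.
have := cardsU E H; rewrite EH cards0 subn0 card_H => <-.
by rewrite cardsC card_prod !card_ord.
Qed.

Lemma card_two_edges_le : #|T| <= n.-1 * #|[set c | ~~ occ c]|.
Proof.
rewrite -sum1_card (partition_big free_corner (mem [set c | ~~ occ c])) /=; last first.
  by move=> t tT; rewrite inE free_corner_unoccupied.
rewrite mulnC -sum_nat_const leq_sum // => z _; rewrite sum1dep_card.
apply: leq_trans (card_free_corners_in_row_le z.1); apply/subset_leq_card/subsetP => t.
by rewrite !inE => /andP[-> /eqP ->] /=.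
Qed.

Lemma exists_shared_free_corner : #|[set c | ~~ occ c]| < #|T| ->
  exists ta tb, [/\ ta \in T, tb \in T, ta != tb & free_corner ta = free_corner tb].
Proof.
move=> lt_Z_T.
have [/exists_inP[ta taT /exists_inP[tb tbT /andP[ne /eqP eq]]] | /exists_inPn no_shared] :=
  boolP [exists ta in T, exists tb in T, (ta != tb) && (free_corner ta == free_corner tb)].
  by exists ta, tb.
have fc_inj : {in T &, injective free_corner}.
  move=> ta tb taT tbT eq; apply/eqP/negPn/negP => ne.
  by move: (no_shared ta taT) => /exists_inPn/(_ tb tbT); rewrite ne eq eqxx.
have : #|free_corner @: T| <= #|[set c | ~~ occ c]|.
  by apply/subset_leq_card/subsetP => _ /imsetP[t tT ->]; rewrite inE free_corner_unoccupied.
by rewrite card_in_imset // leqNgt lt_Z_T.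
Qed.
End Admissible.

Lemma uniq_cross m n (k i p : 'I_m) (l j q : 'I_n) :
  k != i -> k != p -> i != p -> l != j -> l != q -> j != q ->
  uniq [:: (k, l); (k, j); (k, q); (i, l); (p, l)].
Proof.
move=> ki kp ip lj lq jq; rewrite /= !inE !xpair_eqE !eqxx /=.
by rewrite (negbTE ki) (negbTE kp) (negbTE ip) (negbTE lj) (negbTE lq) (negbTE jq).
Qed.

Section FiveByThree.
Variable G : config 5 3.
Hypothesis G_adm : admissible G.
Local Notation E := G.1.
Local Notation T := G.2.
Local Notation occ := (occupied G).
Local Notation deg i := #|row G.1 i|.
Local Notation row_half := (row_half G).
Local Notation col_half := (col_half G).
Local Notation free_corner := (free_corner G).

Lemma card_E_empty_full_le :
  #|E| + #|[set i | deg i == 0]| + #|[set i | deg i == 3]| <= 8.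
Proof. exact: card_empty_full_rows_le (C4_free_admissible G_adm). Qed.

Lemma card_E_le8 : #|E| <= 8.
Proof. by apply: leq_trans card_E_empty_full_le; rewrite -addnA leq_addr. Qed.

Lemma deg_le2 i : 8 <= #|E| + #|[set k | deg k == 0]| -> deg i <= 2.
Proof.
move=> many; have := card_E_empty_full_le; have : deg i <= 3.
  by rewrite -[X in _ <= X](card_ord 3) max_card.
rewrite leq_eqVlt ltnS => /orP[/eqP full | //].
have : 0 < #|[set k | deg k == 3]| by apply/card_gt0P; exists i; rewrite inE full.
lia.
Qed.

Lemma card_E_two_empty_rows i k : i != k -> deg i = 0 -> deg k = 0 -> #|E| <= 6.
Proof.
move=> ik i0 k0; have := card_E_empty_full_le.
have : #|[set i; k]| <= #|[set j | deg j == 0]|.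
  by apply/subset_leq_card/subsetP => j; rewrite !inE => /orP[] /eqP ->; rewrite ?i0 ?k0.
rewrite cards2 ik; lia.
Qed.

Lemma deg_gt0_card8 i : #|E| = 8 -> 0 < deg i.
Proof.
move=> E8; rewrite lt0n; apply/negP => /eqP i0; have := card_E_empty_full_le.
have : 0 < #|[set k | deg k == 0]| by apply/card_gt0P; exists i; rewrite inE i0.
lia.
Qed.

Lemma deg_row_free_corner_le1 t : t \in T -> deg (free_corner t).1 <= 1.
Proof. by move=> tT; have := card_row_free_corner G_adm tT; rewrite addn2 !ltnS. Qed.

Lemma deg_row_free_corner_half t t' c : t \in T -> t' \in T -> t != t' ->
  c \in halves t' -> c.1 = (free_corner t).1 -> deg c.1 = 0.
Proof.
move=> tT t'T tt' ct' c_row; apply/eqP; rewrite -leqn0 -(leq_add2r 3) add0n.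
by have := card_row_free_corner_half G_adm tT t'T tt' ct' c_row.
Qed.

Lemma free_corners_in_one_row ta tb tc : ta \in T -> tb \in T -> tc \in T ->
  ta != tb -> tc != ta -> tc != tb ->
  (free_corner tb).1 = (free_corner ta).1 -> (free_corner tc).1 = (free_corner ta).1 -> False.
Proof.
move=> taT tbT tcT ab ca cb b_row c_row.
have abc : uniq [:: ta; tb; tc] by rewrite /= !inE negb_or ab eq_sym ca eq_sym cb.
have bound := card_free_corners_in_row_le G_adm (free_corner ta).1.
suff : size [:: ta; tb; tc] <= #|[set t in T | (free_corner t).1 == (free_corner ta).1]|.
  by move/leq_trans/(_ bound).
rewrite -(card_uniqP abc).
apply/subset_leq_card/subsetP => t; rewrite !inE.
by case/or3P => /eqP ->; rewrite ?taT ?tbT ?tcT ?b_row ?c_row eqxx.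
Qed.

Lemma shared_free_corner_card7 ta tb tc : ta \in T -> tb \in T -> tc \in T ->
  ta != tb -> tc != ta -> tc != tb -> free_corner ta = free_corner tb -> #|E| = 7 -> False.
Proof.
move=> taT tbT tcT ab ca cb fab E7.
set a := (free_corner ta).1; set a' := (free_corner tc).1.
have row_b : (row_half tb).1 = a by rewrite /a fab.
have row_a : deg a = 0.
  by rewrite -row_b; apply: deg_row_free_corner_half taT tbT ab (row_half_mem G tb) row_b.
have le2 i : deg i <= 2.
  apply: deg_le2; have : 0 < #|[set k | deg k == 0]|.
    by apply/card_gt0P; exists a; rewrite inE row_a.
  lia.
have a'_a : a' != a.
  by apply/eqP => a'a; apply: (free_corners_in_one_row taT tbT tcT ab ca cb); rewrite -?fab.
have half_row_a' t c : t \in T -> t != tc -> c \in halves t -> c.1 != a'.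
  move=> tT ttc ct; apply/eqP => c_a'; rewrite eq_sym in ttc.
  have := deg_row_free_corner_half tcT tT ttc ct c_a'; rewrite c_a' => deg_a'.
  by have := card_E_two_empty_rows a'_a deg_a' row_a; rewrite E7.
have [ca_a' cb_a'] : (col_half ta).1 != a' /\ (col_half tb).1 != a'.
  have [ac bc] : ta != tc /\ tb != tc by rewrite ![_ == tc]eq_sym.
  by split; [apply: half_row_a' taT ac _ | apply: half_row_a' tbT bc _]; apply: col_half_mem.
have ca_a : (col_half ta).1 != a.
  by have /andP[/= rows _] := is_two_edge_oriented G_adm taT; rewrite eq_sym.
have cb_a : (col_half tb).1 != a.
  by have /andP[/= rows _] := is_two_edge_oriented G_adm tbT; rewrite -row_b eq_sym.
have cols_ab : (col_half ta).2 = (col_half tb).2 by rewrite -[_.2]/(free_corner ta).2 fab.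
have ca_cb := col_half_rows_neq G_adm taT tbT ab cols_ab.
have rows_uniq : uniq [:: a; a'; (col_half ta).1; (col_half tb).1].
  rewrite /= !inE !negb_or eq_sym a'_a eq_sym ca_a eq_sym cb_a.
  by rewrite eq_sym ca_a' eq_sym cb_a' ca_cb.
have := sum_row_deficits_le rows_uniq le2; rewrite !big_cons big_nil row_a E7 => gaps.
have deg_a' : deg a' <= 1 := deg_row_free_corner_le1 tcT.
have E_C4 := C4_free_admissible G_adm.
apply: (C4_free_rows_missing_same_column E_C4 ca_cb (s := (col_half ta).2)).
- by rewrite -surjective_pairing (half_notin_E G_adm taT (col_half_mem G ta)).
- by rewrite cols_ab -surjective_pairing (half_notin_E G_adm tbT (col_half_mem G tb)).
- by have := le2 (col_half ta).1; clear -gaps deg_a'; lia.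
- by have := le2 (col_half tb).1; clear -gaps deg_a'; lia.
Qed.

Lemma col_half_row_card8 t t' : t \in T -> t' \in T -> t != t' -> #|E| = 8 ->
  (col_half t).1 != (free_corner t').1 /\ row E (col_half t).1 = [set~ (col_half t).2].
Proof.
move=> tT t'T tt' E8.
have pos i : 0 < deg i := deg_gt0_card8 i E8.
have le2 i : deg i <= 2 by apply: deg_le2; rewrite E8 leq_addr.
have half_off_row t0 t1 c : t0 \in T -> t1 \in T -> t0 != t1 -> c \in halves t1 ->
    c.1 != (free_corner t0).1.
  move=> t0T t1T ne ct1; apply/eqP => c_row.
  by have := pos c.1; rewrite (deg_row_free_corner_half t0T t1T ne ct1 c_row).
have rr : (free_corner t).1 != (free_corner t').1.
  by rewrite eq_sym; apply: half_off_row tT t'T tt' (row_half_mem G t').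
have cr' : (col_half t).1 != (free_corner t').1.
  by apply: half_off_row t'T tT _ (col_half_mem G t); rewrite eq_sym.
have cr : (col_half t).1 != (free_corner t).1.
  by have /andP[/= rows _] := is_two_edge_oriented G_adm tT; rewrite eq_sym.
have rows_uniq : uniq [:: (free_corner t).1; (free_corner t').1; (col_half t).1].
  by rewrite /= !inE negb_or rr eq_sym cr eq_sym cr'.
have := sum_row_deficits_le rows_uniq le2; rewrite !big_cons big_nil E8 => gaps.
split=> //; apply: row_eq_setC1; last first.
  by rewrite -surjective_pairing (half_notin_E G_adm tT (col_half_mem G t)).
have := deg_row_free_corner_le1 tT; have := deg_row_free_corner_le1 t'T.
by have := le2 (col_half t).1; clear -gaps; lia.
Qed.

Lemma two_two_edges_card8 t1 t2 : t1 \in T -> t2 \in T -> t1 != t2 -> #|E| = 8 -> False.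
Proof.
move=> t1T t2T t12 E8.
have [_ row_c1] := col_half_row_card8 t1T t2T t12 E8.
have t21 : t2 != t1 by rewrite eq_sym.
have [c2_a1 row_c2] := col_half_row_card8 t2T t1T t21 E8.
have /andP[/= a1_c1 b1_d1] := is_two_edge_oriented G_adm t1T.
have c1_c2 : (col_half t1).1 != (col_half t2).1.
  apply/negP => /eqP rows12; move: (row_c1); rewrite rows12 row_c2 => /setC_inj/set1_inj.
  by move/esym/(col_half_rows_neq G_adm t1T t2T t12); rewrite rows12 eqxx.
have [l] : exists l, ((free_corner t1).1, l) \in E.
  by have /card_gt0P[l] := deg_gt0_card8 (free_corner t1).1 E8; rewrite inE; exists l.
move=> a1l_in.
have l_b1 : l != (row_half t1).2.
  apply: contraTneq a1l_in => ->.
  have := half_notin_E G_adm t1T (row_half_mem G t1).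
  by rewrite [row_half t1]surjective_pairing.
have l_d1 : l != (col_half t1).2.
  apply: contraTneq a1l_in => ->.
  by have := free_corner_notin_E G_adm t1T; rewrite /free_corner.
have c2_occ j : occ ((col_half t2).1, j).
  have [-> | j_d2] := eqVneq j (col_half t2).2.
    by rewrite -surjective_pairing (occupied_half t2T (col_half_mem G t2)).
  by apply/orP; left; move/setP/(_ j): row_c2; rewrite !inE j_d2.
apply: (no_type3_oriented G_adm t1T (k := (col_half t2).1) (l := l)).
  by apply: uniq_cross; rewrite // eq_sym.
rewrite /= !c2_occ /occupied a1l_in /=.
by move/setP/(_ l): row_c1; rewrite !inE l_d1 => ->.
Qed.

Lemma weight_le9 : weight G <= 9.
Proof.
rewrite /weight leqNgt; apply/negP => heavy.
have cells : #|E| + 2 * #|T| + #|[set c | ~~ occ c]| = 15 := card_cells G_adm.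
have TZ : #|T| <= 2 * #|[set c | ~~ occ c]| := card_two_edges_le G_adm.
have E_le8 := card_E_le8.
have [[E7 [ZT T3]] | [E8 T2]] : #|E| = 7 /\ #|[set c | ~~ occ c]| < #|T| /\ #|T| = 3
    \/ #|E| = 8 /\ 1 < #|T| by lia.
  have [ta [tb [taT tbT ab fab]]] := exists_shared_free_corner G_adm ZT.
  have [tc] : exists tc, tc \in T :\: [set ta; tb].
    apply/card_gt0P; rewrite cardsD T3 subn_gt0 ltnS.
    by rewrite (leq_trans (subset_leq_card (subsetIr _ _))) // cards2 ltnS leq_b1.
  rewrite !inE negb_or => /andP[/andP[ca cb] tcT].
  exact: shared_free_corner_card7 taT tbT tcT ab ca cb fab E7.
have /card_gt1P[t1 [t2 [t1T t2T t12]]] := T2.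
exact: two_two_edges_card8 t1T t2T t12 E8.
Qed.
End FiveByThree.

(* [inord] is stuck under [vm_compute] (it goes through the opaque [idP]); reducing
   modulo the bounds keeps these concrete cells computable. *)
Definition cell53 (i j : nat) : cell 5 3 :=
  (Ordinal (ltn_pmod i (isT : 0 < 5)), Ordinal (ltn_pmod j (isT : 0 < 3))).

Definition E0 : {set cell 5 3} :=
  [set c in [:: cell53 0 1; cell53 0 2; cell53 1 0; cell53 1 1;
                cell53 2 0; cell53 2 2; cell53 3 0; cell53 4 2]].
Definition e0 : two_edge 5 3 := (cell53 0 0, cell53 4 1).
Definition G0 : config 5 3 := (E0, [set e0]).

Lemma forall_in_set1 (T : finType) (a : T) (P : pred T) : [forall x in [set a], P x] = P a.
Proof. by apply/forall_inP/idP => [/(_ a (set11 a)) | Pa x /set1P ->]. Qed.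

Lemma exists_in_set1 (T : finType) (a : T) (P : pred T) : [exists x in [set a], P x] = P a.
Proof. by apply/exists_inP/idP => [[x /set1P -> //] | Pa]; exists a; rewrite ?set11. Qed.

Lemma occupied_G0 c : occupied G0 c = (c \in E0) || (c == e0.1) || (c == e0.2).
Proof. by rewrite /occupied exists_in_set1 orbA. Qed.

Lemma weight_G0 : weight G0 = 9.
Proof. by rewrite /weight cards1 cardsE; apply/eqP; rewrite addn1 eqSS; apply/eqP/card_uniqP. Qed.

Lemma admissible_G0 : admissible G0.
Proof.
rewrite /admissible /simple /has_gen_C4 /= !forall_in_set1 eqxx /= !negb_or.
apply/and4P; split; rewrite ?inE //.
- apply/existsP => -[i /existsP[k /existsP[j /existsP[l]]]]; rewrite /= !inE.
  by case: i => [[|[|[|[|[|i]]]]] ?]; case: k => [[|[|[|[|[|k]]]]] ?];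
     case: j => [[|[|[|j]]] ?]; case: l => [[|[|[|l]]] ?]; vm_compute.
- by rewrite /c4_type2 exists_in_set1 !occupied_G0 !inE.
- rewrite /c4_type3 exists_in_set1; apply/existsP => -[[k l]] /=; rewrite !occupied_G0 !inE.
  by case: k => [[|[|[|[|[|k]]]]] ?]; case: l => [[|[|[|l]]] ?]; vm_compute.
Qed.

Theorem theorem4p3 : z2 5 3 = 9.
Proof.
apply/eqP; rewrite eqn_leq; apply/andP; split.
- by apply/bigmax_leqP => G; exact: weight_le9.
- by rewrite -weight_G0; apply: leq_bigmax_cond; exact: admissible_G0.
Qed.
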